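(* In the setting of the context, let $l\in\{0,1,\dots,N\}$. If $i\in J_m$ with $m+1\le l$, then $t_i^{l+1}\ne t_{i-1}^{l+1}$. Consequently, for every $u\in T_{l+1}$, the number of pairs $(i,s)$ with $i\in\{1,\dots,n\}$, $i\in J_m$ for some $m$ with $m+1\le l$, $s\in\{i-1,i\}$, and $t_s^{l+1}=u$ (hence $t_s^l=\pi_l(u)$) is at most two.
   Context: Fix $S>0$, $q\in(0,1)$, $d(s,t)=|s-t|^q$ on $[0,S]$, and $r\ge4$. For $n\ge0$ let $T_n=\{kr^{-n/q}S:k=0,1,2,\dots\}\cap[0,S]$ and $\pi_n(t)=\max\{s\in T_n:s\le t\}$. Let $0\le t_0<t_1<\dots<t_n\le S$ and for $m\ge0$, $J_m=\{i\in\{1,\dots,n\}:r^{-m-1}S^q<d(t_{i-1},t_i)\le r^{-m}S^q\}$. Let $N$ be an integer with $J_m=\emptyset$ for $m> N$; define $t_i^{N+1}=\pi_{N+1}(t_i)$ and recursively $t_i^l=\pi_l(t_i^{l+1})$ for $l=N,\dots,0$. *)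

From Stdlib Require Import Reals Lra Lia List.
Open Scope R_scope.

(* d(s,t) = |s-t|^q, with the convention 0^q = 0 (Rpower 0 q would be 1). *)
Definition dist (q s t : R) : R :=
  if Req_EM_T (Rabs (s - t)) 0 then 0 else Rpower (Rabs (s - t)) q.

Definition mesh (Sv q r : R) (k : nat) : R := Rpower r (- INR k / q) * Sv.

Definition inT (Sv q r : R) (k : nat) (x : R) : Prop :=
  (exists j : nat, x = INR j * mesh Sv q r k) /\ 0 <= x <= Sv.

(* pi_k(t) = max { s in T_k : s <= t }.  For t in [0,S] this maximum equals
   floor(t / mesh) * mesh  (Int_part is the floor function). *)
Definition pi (Sv q r : R) (k : nat) (t : R) : R :=
  IZR (Int_part (t / mesh Sv q r k)) * mesh Sv q r k.

(* Downward recursion: chain_aux N j x = x^{N+1-j}, where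
   x^{N+1} = pi_{N+1}(x) and x^l = pi_l(x^{l+1}). *)
Fixpoint chain_aux (Sv q r : R) (N : nat) (j : nat) (x : R) : R :=
  match j with
  | O => pi Sv q r (N + 1)%nat x
  | Datatypes.S j' => pi Sv q r (N + 1 - j)%nat (chain_aux Sv q r N j' x)
  end.

Definition tchain (Sv q r : R) (N l : nat) (x : R) : R :=
  chain_aux Sv q r N (N + 1 - l)%nat x.

Definition inJ (Sv q r : R) (t : nat -> R) (n m i : nat) : Prop :=
  (1 <= i <= n)%nat /\
  Rpower r (- INR m - 1) * Rpower Sv q < dist q (t (i - 1)%nat) (t i) /\
  dist q (t (i - 1)%nat) (t i) <= Rpower r (- INR m) * Rpower Sv q.

From Pilot Require Import Defs.
From Stdlib Require Import Reals Lra Lia List.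
Open Scope R_scope.

(* Write m_k = r^{-k/q} S for the mesh of the grid T_k.  Since
   r >= 4 and 1/q > 1, consecutive meshes shrink by a factor at least 4.
   The projection pi_k moves a point down by less than m_k, so the iterated
   projection x |-> x^{l+1} = pi_{l+1}(... pi_{N+1}(x)) moves it down by less
   than m_{l+1} (1 + 1/4 + 1/16 + ...) <= m_l / 3.  Hence two points with the
   same image x^{l+1} are closer than m_l / 3.
   On the other hand, if i is in J_m with m + 1 <= l, then
   t_i - t_{i-1} > r^{-(m+1)/q} S = m_{m+1} >= m_l, so t_i and t_{i-1} have
   different images: this is part (i).  For part (ii), distinct admissible
   pairs (i,s) with the same image u have distinct indices i (by part (i)),
   and three such indices i1 < i2 < i3 are impossible: the pairs for i1 and
   i3 lie on both sides of the gap [t_{i2-1}, t_{i2}] of length > m_l, yet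
   have the same image.  A list of pairwise distinct-index pairs without a
   strictly increasing triple of indices has at most two elements. *)

Lemma Rpower_pos (x y : R) : 0 < Rpower x y.
Proof. unfold Rpower; apply exp_pos. Qed.

Section Grid.

Variables (Sv q r : R).
Hypotheses (HS : 0 < Sv) (Hq0 : 0 < q) (Hq1 : q < 1) (Hr : 4 <= r).

Lemma mesh_pos (k : nat) : 0 < mesh Sv q r k.
Proof. unfold mesh; pose proof (Rpower_pos r (- INR k / q)); nra. Qed.

(* The meshes decrease geometrically with ratio at most 1/4:
   m_{k+1} = m_k * r^{-1/q} and r^{1/q} >= r >= 4. *)
Lemma mesh_step (k : nat) : 4 * mesh Sv q r (S k) <= mesh Sv q r k.
Proof.
  unfold mesh.
  replace (- INR (S k) / q) with (- INR k / q + - (1 / q))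
    by (rewrite S_INR; field; lra).
  rewrite Rpower_plus.
  assert (Hinv : Rpower r (- (1 / q)) * Rpower r (1 / q) = 1).
  { rewrite <- Rpower_plus, Rplus_opp_l; apply Rpower_O; lra. }
  assert (Hgrow : r <= Rpower r (1 / q)).
  { rewrite <- (Rpower_1 r) at 1 by lra.
    apply Rle_Rpower; [lra|].
    apply (Rmult_le_reg_l q); [lra|]; field_simplify; lra. }
  assert (Hfac : Rpower r (- (1 / q)) * 4 <= 1).
  { pose proof (Rpower_pos r (- (1 / q))); nra. }
  assert (Hscale : 0 < Rpower r (- INR k / q) * Sv)
    by (pose proof (Rpower_pos r (- INR k / q)); nra).
  pose proof (Rmult_le_compat_l _ _ _ (Rlt_le _ _ Hscale) Hfac); lra.
Qed.

Lemma mesh_antitone (k j : nat) : (k <= j)%nat -> mesh Sv q r j <= mesh Sv q r k.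
Proof.
  induction 1 as [|j _ IH]; [lra|].
  pose proof (mesh_step j); pose proof (mesh_pos (S j)); lra.
Qed.

Lemma pi_bound (k : nat) (x : R) :
  x - mesh Sv q r k < pi Sv q r k x <= x.
Proof.
  unfold pi; pose proof (mesh_pos k) as Hm.
  destruct (base_Int_part (x / mesh Sv q r k)).
  set (z := IZR (Int_part (x / mesh Sv q r k))) in *.
  assert (E : x = x / mesh Sv q r k * mesh Sv q r k) by (field; lra).
  split; rewrite E at 1; nra.
Qed.

Lemma chain_bound (N j : nat) (x : R) : (j <= N)%nat ->
  x - 4 / 3 * mesh Sv q r (N + 1 - j) < chain_aux Sv q r N j x <= x.
Proof.
  induction j as [|j IH]; intros Hj; simpl.
  - rewrite Nat.sub_0_r.
    pose proof (pi_bound (N + 1) x); pose proof (mesh_pos (N + 1)); lra.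
  - destruct (IH ltac:(lia)) as [Hlow Hup].
    pose proof (pi_bound (N + 1 - S j) (chain_aux Sv q r N j x)).
    replace (N + 1 - j)%nat with (S (N + 1 - S j)) in Hlow by lia.
    pose proof (mesh_step (N + 1 - S j)); lra.
Qed.

Lemma tchain_bound (N l : nat) (x : R) : (l <= N)%nat ->
  x - mesh Sv q r l / 3 < tchain Sv q r N (l + 1) x <= x.
Proof.
  intros Hl; unfold tchain.
  destruct (chain_bound N (N + 1 - (l + 1)) x ltac:(lia)).
  replace (N + 1 - (N + 1 - (l + 1)))%nat with (S l) in * by lia.
  pose proof (mesh_step l); lra.
Qed.

Lemma same_image_close (N l : nat) (x y : R) : (l <= N)%nat ->
  tchain Sv q r N (l + 1) x = tchain Sv q r N (l + 1) y ->
  x - y < mesh Sv q r l / 3.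
Proof.
  intros Hl E.
  pose proof (tchain_bound N l x Hl); pose proof (tchain_bound N l y Hl); lra.
Qed.

(* An increment of class J_m, m + 1 <= l, is longer than m_l, since
   d(t_{i-1}, t_i) > r^{-m-1} S^q = (m_{m+1})^q and u |-> u^q is monotone. *)
Lemma J_gap (t : nat -> R) (n m i l : nat) :
  t (i - 1)%nat < t i -> inJ Sv q r t n m i -> (m + 1 <= l)%nat ->
  mesh Sv q r l < t i - t (i - 1)%nat.
Proof.
  intros Hlt [_ [Hlow _]] Hml.
  pose proof (mesh_antitone (m + 1) l Hml).
  enough (mesh Sv q r (m + 1) < t i - t (i - 1)%nat) by lra.
  assert (Habs : Rabs (t (i - 1)%nat - t i) = t i - t (i - 1)%nat)
    by (rewrite Rabs_left1; lra).
  assert (Hmq : Rpower (mesh Sv q r (m + 1)) q = Rpower r (- INR m - 1) * Rpower Sv q).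
  { unfold mesh; rewrite <- Rpower_mult_distr by (auto using Rpower_pos).
    rewrite Rpower_mult, plus_INR; simpl; f_equal; f_equal; field; lra. }
  unfold Defs.dist in Hlow; rewrite Habs in Hlow.
  destruct (Req_EM_T _ 0); [lra|].
  destruct (Rlt_le_dec (mesh Sv q r (m + 1)) (t i - t (i - 1)%nat)) as [|Hle]; [easy|].
  assert (Rpower (t i - t (i - 1)%nat) q <= Rpower (mesh Sv q r (m + 1)) q)
    by (apply Rle_Rpower_l; lra).
  lra.
Qed.

End Grid.

Lemma t_mono (t : nat -> R) (n : nat) :
  (forall i : nat, (1 <= i <= n)%nat -> t (i - 1)%nat < t i) ->
  forall a b : nat, (a <= b)%nat -> (b <= n)%nat -> t a <= t b.
Proof.
  intros Hinc a b Hab; induction Hab as [|b _ IH]; intros Hb; [lra|].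
  specialize (IH ltac:(lia)); specialize (Hinc (S b) ltac:(lia)).
  rewrite Nat.sub_succ, Nat.sub_0_r in Hinc; lra.
Qed.

Lemma length_le_2_of_no_increasing_triple {A : Type} (key : A -> nat) (L : list A) :
  NoDup L ->
  (forall a b : A, In a L -> In b L -> a <> b -> key a <> key b) ->
  (forall a b c : A, In a L -> In b L -> In c L ->
     (key a < key b)%nat -> (key b < key c)%nat -> False) ->
  (length L <= 2)%nat.
Proof.
  intros Hnd Hkey Hchain.
  destruct L as [|a [|b [|c rest]]]; simpl; try lia; exfalso.
  apply NoDup_cons_iff in Hnd as [Na Hnd]; apply NoDup_cons_iff in Hnd as [Nb _].
  assert (Ia : In a (a :: b :: c :: rest)) by (simpl; auto).
  assert (Ib : In b (a :: b :: c :: rest)) by (simpl; auto).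
  assert (Ic : In c (a :: b :: c :: rest)) by (simpl; auto).
  assert (kab : key a <> key b) by (apply Hkey; auto; intros ->; apply Na; simpl; auto).
  assert (kac : key a <> key c) by (apply Hkey; auto; intros ->; apply Na; simpl; auto).
  assert (kbc : key b <> key c) by (apply Hkey; auto; intros ->; apply Nb; simpl; auto).
  assert (Hord : (key a < key b < key c \/ key a < key c < key b \/ key b < key a < key c
               \/ key b < key c < key a \/ key c < key a < key b \/ key c < key b < key a)%nat)
    by lia.
  destruct Hord as [[]|[[]|[[]|[[]|[[]|[]]]]]]; eauto.
Qed.

Theorem lemma2 (Sv q r : R) (n N : nat) (t : nat -> R)
  (HS : 0 < Sv) (Hq0 : 0 < q) (Hq1 : q < 1) (Hr : 4 <= r)
  (Ht0 : 0 <= t 0%nat) (Htn : t n <= Sv)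
  (Hinc : forall i : nat, (1 <= i <= n)%nat -> t (i - 1)%nat < t i)
  (HN : forall m i : nat, (N < m)%nat -> ~ inJ Sv q r t n m i)
  (l : nat) (Hl : (l <= N)%nat) :
  (forall i m : nat, inJ Sv q r t n m i -> (m + 1 <= l)%nat ->
     tchain Sv q r N (l + 1) (t i) <> tchain Sv q r N (l + 1) (t (i - 1)%nat))
  /\
  (forall u : R, inT Sv q r (l + 1) u ->
     forall L : list (nat * nat), NoDup L ->
       (forall p : nat * nat, In p L ->
          let i := fst p in let s := snd p in
          (1 <= i <= n)%nat /\
          (exists m : nat, inJ Sv q r t n m i /\ (m + 1 <= l)%nat) /\
          (s = (i - 1)%nat \/ s = i) /\
          tchain Sv q r N (l + 1) (t s) = u) ->
       (length L <= 2)%nat).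
Proof.
  assert (Hsep : forall i m : nat, inJ Sv q r t n m i -> (m + 1 <= l)%nat ->
     tchain Sv q r N (l + 1) (t i) <> tchain Sv q r N (l + 1) (t (i - 1)%nat)).
  { intros i m HJ Hml E.
    pose proof (J_gap Sv q r HS Hq0 Hq1 Hr t n m i l (Hinc i (proj1 HJ)) HJ Hml).
    pose proof (same_image_close Sv q r HS Hq0 Hq1 Hr N l _ _ Hl E).
    pose proof (mesh_pos Sv q r HS l); lra. }
  split; [exact Hsep|].
  intros u _ L Hnd HP.
  apply (length_le_2_of_no_increasing_triple fst L Hnd).
  - intros [i s] [i' s'] Hp Hp' Hne Heq; simpl in Heq; subst i'.
    destruct (HP _ Hp) as [_ [[m [HJ Hm]] [Hs Es]]].
    destruct (HP _ Hp') as [_ [_ [Hs' Es']]]; simpl in *.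
    apply (Hsep i m HJ Hm).
    destruct Hs as [->| ->]; destruct Hs' as [->| ->]; congruence.
  - intros [i1 s1] [i2 s2] [i3 s3] H1 H2 H3 L12 L23; simpl in L12, L23.
    destruct (HP _ H1) as [_ [_ [Hs1 E1]]].
    destruct (HP _ H2) as [Hi2 [[m [HJ Hm]] _]].
    destruct (HP _ H3) as [Hi3 [_ [Hs3 E3]]]; simpl in *.
    pose proof (J_gap Sv q r HS Hq0 Hq1 Hr t n m i2 l (Hinc i2 Hi2) HJ Hm).
    pose proof (t_mono t n Hinc s1 (i2 - 1)%nat ltac:(lia) ltac:(lia)).
    pose proof (t_mono t n Hinc i2 s3 ltac:(lia) ltac:(lia)).
    assert (Hsame : tchain Sv q r N (l + 1) (t s3) = tchain Sv q r N (l + 1) (t s1))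
      by congruence.
    pose proof (same_image_close Sv q r HS Hq0 Hq1 Hr N l _ _ Hl Hsame).
    pose proof (mesh_pos Sv q r HS l); lra.
Qed.
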